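(* Let $m\ge1$, $F(x)=|x^h|^2$ and $G(x)=-x^3$ on $\Omega=\mathbb R^2\times\,]0,1[$. Let $(\widetilde\varrho_\varepsilon)_{0<\varepsilon\le1}$ be a family of positive functions on $\Omega$ solving $\Pi(\widetilde\varrho_\varepsilon(x))=\varepsilon^{2(m-1)}F(x)+\varepsilon^mG(x)$ for all $x\in\Omega$. Then there exist $\varepsilon_0>0$ and $0<\rho_*<1$ such that $\widetilde\varrho_\varepsilon(x)\ge\rho_*$ for all $\varepsilon\in\,]0,\varepsilon_0]$ and all $x\in\Omega$.
   Context: Points of $\Omega$ are $x=(x^h,x^3)$ with $x^h\in\mathbb R^2$. The pressure is $p(\varrho,\vartheta)=\vartheta^{5/2}P(\varrho/\vartheta^{3/2})+\frac a3\vartheta^4$ with $a>0$, where $P\in C^1([0,\infty))\cap C^2(]0,\infty[)$, $P(0)=0$, $P'(Z)>0$ for all $Z\ge0$, $0<\big(\frac53P(Z)-P'(Z)Z\big)/Z<c$ for all $Z>0$, and $\lim_{Z\to+\infty}P(Z)/Z^{5/3}=P_\infty>0$. Fix a constant $\overline\vartheta>0$ and set $\Pi(\varrho):=\int_1^\varrho\frac{\partial_\varrho p(z,\overline\vartheta)}{z}dz$ for $\varrho>0$. *)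

From Stdlib Require Import Reals.
From Coquelicot Require Import Coquelicot.
Open Scope R_scope.

Definition pressure (P : R -> R) (a rho theta : R) : R :=
  Rpower theta (5/2) * P (rho / Rpower theta (3/2)) + a / 3 * theta ^ 4.

Definition Pi_fun (P : R -> R) (a thetabar rho : R) : R :=
  RInt (fun z => Derive (fun r => pressure P a r thetabar) z / z) 1 rho.

Definition pressure_hyp (P dP : R -> R) (c Pinf : R) : Prop :=
  (* C^1 on [0,oo): derivative dP on ]0,oo[, right derivative at 0,
     dP continuous on ]0,oo[ and right-continuous at 0 *)
  (forall Z, 0 < Z -> is_derive P Z (dP Z)) /\
  filterlim (fun h => (P h - P 0) / h) (at_right 0) (locally (dP 0)) /\
  (forall Z, 0 < Z -> continuous dP Z) /\
  filterlim dP (at_right 0) (locally (dP 0)) /\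
  (exists d2P : R -> R,
      forall Z, 0 < Z -> is_derive dP Z (d2P Z) /\ continuous d2P Z) /\
  P 0 = 0 /\
  (forall Z, 0 <= Z -> 0 < dP Z) /\
  (forall Z, 0 < Z -> 0 < (5/3 * P Z - dP Z * Z) / Z /\
                      (5/3 * P Z - dP Z * Z) / Z < c) /\
  is_lim (fun Z => P Z / Rpower Z (5/3)) p_infty Pinf /\
  0 < Pinf.

(* Pi' = d_rho p(., thetabar) / rho is positive on ]0,oo[ and Pi(1) = 0, so Pi is
   increasing with Pi(1/2) < 0.  The right-hand side of the equation is > -eps^m >= -eps,
   hence exceeds Pi(1/2) once eps <= -Pi(1/2), and monotonicity of Pi forces
   rho_eps >= 1/2.  Only the positivity and continuity of P' enter; Rpower is positive
   by construction. *)

From Stdlib Require Import Reals Lra.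
From Coquelicot Require Import Coquelicot.
Open Scope R_scope.

Lemma Rpower_le_base (e m : R) : 0 < e <= 1 -> 1 <= m -> Rpower e m <= e.
Proof.
  intros [He0 He1] Hm.
  assert (Hln : ln e <= 0) by (rewrite <- ln_1; apply ln_le; lra).
  unfold Rpower. rewrite <- (exp_ln e) at 2 by lra.
  apply Rnot_lt_le. intros Hlt. apply exp_lt_inv in Hlt. nra.
Qed.

Section IntegralOfPositive.

Variable f : R -> R.
Hypothesis f_cont : forall z, 0 < z -> continuous f z.
Hypothesis f_pos : forall z, 0 < z -> 0 < f z.

Lemma ex_RInt_pos (u v : R) : 0 < u -> 0 < v -> ex_RInt f u v.
Proof.
  intros Hu Hv. apply (@ex_RInt_continuous R_CompleteNormedModule). intros z [Hz _].
  apply f_cont. apply Rlt_le_trans with (Rmin u v); [apply Rmin_glb_lt |]; lra.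
Qed.

Lemma RInt_pos_le (b r s : R) : 0 < b -> 0 < r <= s -> RInt f b r <= RInt f b s.
Proof.
  intros Hb Hrs.
  rewrite <- (RInt_Chasles f b r s) by (apply ex_RInt_pos; lra).
  assert (0 <= RInt f r s).
  { apply RInt_ge_0; [lra | apply ex_RInt_pos; lra |].
    intros x Hx. left. apply f_pos. lra. }
  change (RInt f b r <= RInt f b r + RInt f r s). lra.
Qed.

Lemma RInt_pos_lt_0 (b s : R) : 0 < s < b -> RInt f b s < 0.
Proof.
  intros Hs.
  rewrite <- opp_RInt_swap by (apply ex_RInt_pos; lra).
  assert (0 < RInt f s b).
  { apply RInt_gt_0; [lra | |]; intros x Hx; [apply f_pos | apply f_cont]; lra. }
  change (- RInt f s b < 0). lra.
Qed.

End IntegralOfPositive.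

Section PiFunction.

Variables (P dP : R -> R) (a thetabar : R).
Hypothesis P_derive : forall Z, 0 < Z -> is_derive P Z (dP Z).
Hypothesis dP_cont : forall Z, 0 < Z -> continuous dP Z.
Hypothesis dP_pos : forall Z, 0 < Z -> 0 < dP Z.

Let k := Rpower thetabar (3/2).

Definition Pi_density (z : R) : R := Rpower thetabar (5/2) / k * dP (z / k) / z.

Lemma pressure_is_derive (z : R) : 0 < z ->
  is_derive (fun r => pressure P a r thetabar) z (Rpower thetabar (5/2) / k * dP (z / k)).
Proof.
  intros Hz. unfold pressure.
  assert (Hk : 0 < k) by apply exp_pos.
  evar_last.
  - apply (is_derive_plus (fun r => Rpower thetabar (5/2) * P (r / k)) (fun _ => a / 3 * thetabar ^ 4));
      [| apply is_derive_const].
    apply is_derive_scal. apply (is_derive_comp P (fun r => r / k)).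
    + apply P_derive. apply Rdiv_lt_0_compat; lra.
    + auto_derive; auto.
  - rewrite plus_zero_r. change (scal ?s ?v) with (s * v). field. lra.
Qed.

Lemma Pi_density_continuous (z : R) : 0 < z -> continuous Pi_density z.
Proof.
  intros Hz. assert (Hk : 0 < k) by apply exp_pos.
  apply (continuous_mult (fun y => Rpower thetabar (5/2) / k * dP (y / k)) Rinv).
  - apply (continuous_mult (fun _ => Rpower thetabar (5/2) / k) (fun y => dP (y / k)));
      [apply continuous_const |].
    apply (continuous_comp (fun y => y / k) dP).
    + apply (continuous_mult (fun y => y) (fun _ => / k)); [apply continuous_id | apply continuous_const].
    + apply dP_cont. apply Rdiv_lt_0_compat; lra.
  - apply continuous_Rinv. lra.
Qed.

Lemma Pi_density_pos (z : R) : 0 < z -> 0 < Pi_density z.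
Proof.
  intros Hz. assert (Hk : 0 < k) by apply exp_pos.
  unfold Pi_density. apply Rdiv_lt_0_compat; [| lra].
  apply Rmult_lt_0_compat; [apply Rdiv_lt_0_compat; [apply exp_pos | lra] |].
  apply dP_pos. apply Rdiv_lt_0_compat; lra.
Qed.

Lemma Pi_fun_RInt (r : R) : 0 < r -> Pi_fun P a thetabar r = RInt Pi_density 1 r.
Proof.
  intros Hr. unfold Pi_fun. apply RInt_ext. intros z Hz.
  assert (Hz0 : 0 < z) by (apply Rlt_trans with (Rmin 1 r); [apply Rmin_glb_lt |]; lra).
  unfold Pi_density. f_equal. apply is_derive_unique, pressure_is_derive, Hz0.
Qed.

Lemma Pi_fun_le (r s : R) : 0 < r <= s -> Pi_fun P a thetabar r <= Pi_fun P a thetabar s.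
Proof.
  intros Hrs. rewrite !Pi_fun_RInt by lra.
  apply RInt_pos_le; [exact Pi_density_continuous | exact Pi_density_pos | lra | lra].
Qed.

Lemma Pi_fun_lt_0 (s : R) : 0 < s < 1 -> Pi_fun P a thetabar s < 0.
Proof.
  intros Hs. rewrite Pi_fun_RInt by lra.
  apply RInt_pos_lt_0; [exact Pi_density_continuous | exact Pi_density_pos | lra].
Qed.

End PiFunction.

Lemma forcing_gt_opp (eps m x1 x2 x3 : R) : 0 < eps <= 1 -> 1 <= m -> 0 < x3 < 1 ->
  - eps < Rpower eps (2 * (m - 1)) * (x1 ^ 2 + x2 ^ 2) + Rpower eps m * (- x3).
Proof.
  intros He Hm Hx3.
  pose proof (Rpower_le_base eps m He Hm).
  pose proof (exp_pos (2 * (m - 1) * ln eps)).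
  pose proof (exp_pos (m * ln eps)).
  unfold Rpower in *.
  assert (0 <= x1 ^ 2 + x2 ^ 2) by nra.
  nra.
Qed.

Theorem lemma2p2
  (P dP : R -> R) (c Pinf a thetabar m : R)
  (hP : pressure_hyp P dP c Pinf) (ha : 0 < a) (hth : 0 < thetabar)
  (hm : 1 <= m)
  (rho : R -> R -> R -> R -> R)
  (hpos : forall eps x1 x2 x3, 0 < eps <= 1 -> 0 < x3 < 1 ->
            0 < rho eps x1 x2 x3)
  (heq : forall eps x1 x2 x3, 0 < eps <= 1 -> 0 < x3 < 1 ->
            Pi_fun P a thetabar (rho eps x1 x2 x3)
            = Rpower eps (2 * (m - 1)) * (x1 ^ 2 + x2 ^ 2)
              + Rpower eps m * (- x3)) :
  exists eps0 rhos, 0 < eps0 /\ 0 < rhos < 1 /\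
    forall eps x1 x2 x3, 0 < eps <= eps0 -> 0 < x3 < 1 ->
      rhos <= rho eps x1 x2 x3.
Proof.
  destruct hP as (P_derive & _ & dP_cont & _ & _ & _ & dP_nonneg_pos & _).
  assert (dP_pos : forall Z, 0 < Z -> 0 < dP Z) by (intros Z HZ; apply dP_nonneg_pos; lra).
  set (q := - Pi_fun P a thetabar (1/2)).
  assert (Hq : 0 < q).
  { pose proof (Pi_fun_lt_0 P dP a thetabar P_derive dP_cont dP_pos (1/2)). unfold q. lra. }
  exists (Rmin 1 q), (1/2). split; [apply Rmin_glb_lt; lra |]. split; [lra |].
  intros eps x1 x2 x3 He Hx3.
  pose proof (Rmin_l 1 q). pose proof (Rmin_r 1 q).
  assert (He1 : 0 < eps <= 1) by lra.
  apply Rnot_lt_le. intros Hlt.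
  pose proof (Pi_fun_le P dP a thetabar P_derive dP_cont dP_pos (rho eps x1 x2 x3) (1/2)
                (conj (hpos eps x1 x2 x3 He1 Hx3) (Rlt_le _ _ Hlt))) as HPi.
  rewrite heq in HPi by assumption.
  pose proof (forcing_gt_opp eps m x1 x2 x3 He1 hm Hx3).
  unfold q in *. lra.
Qed.
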